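(* Consider a deterministic two-player mean-payoff game on $\vec{\mathcal G}=([n],E)$, $m=|E|$. Fix $r\in\mathbb R^m$, and let $\tilde r\in\mathbb R^m$ and $\varepsilon>0$ satisfy $\|r-\tilde r\|_\infty\le\varepsilon$. Let $(\sigma,\tau)\in\Xi$ and let $E^{\sigma,\tau}\subseteq E$ be the set of edges used by $(\sigma,\tau)$. Define $r^{(1)},r^{(2)}\in\mathbb R^m$ by $r^{(1)}_{ij}=r^{(2)}_{ij}=\tilde r_{ij}$ if $(i,j)\in E^{\sigma,\tau}$, and $r^{(1)}_{ij}=\tilde r_{ij}-2n\varepsilon$, $r^{(2)}_{ij}=\tilde r_{ij}+2n\varepsilon$ otherwise. If $(\sigma,\tau)$ is a pair of optimal policies in the mean-payoff games with weights $r^{(1)}$ and with weights $r^{(2)}$, then $(\sigma,\tau)$ is a pair of optimal policies in the mean-payoff game with weights $r$.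
   Context: The game is played on a directed graph without multiple edges, each vertex having an outgoing edge, with $[n]=V_{\max}\uplus V_{\min}$ and weights $r\in\mathbb R^E$. Policies $\sigma:V_{\max}\to[n]$, $\tau:V_{\min}\to[n]$ with $(i,\sigma(i)),(i,\tau(i))\in E$; $E^{\sigma,\tau}=\{(i,\sigma(i)):i\in V_{\max}\}\cup\{(i,\tau(i)):i\in V_{\min}\}$. $\Xi$ is the set of pairs for which the subgraph with edge set $E^{\sigma,\tau}$ has exactly one directed cycle. Playing $(\sigma,\tau)$ from $i$, the token enters a cycle; $g_i(\sigma,\tau)$ is its mean weight (sum of weights / number of edges). The value is the unique $\lambda\in\mathbb R^n$ admitting $(\sigma^*,\tau^* )$ with $g_i(\sigma',\tau^* )\le\lambda_i\le g_i(\sigma^*,\tau')$ for all $i,\sigma',\tau'$; such $(\sigma^*,\tau^* )$ is called a pair of optimal policies. *)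

From HB Require Import structures.
From mathcomp Require Import all_boot all_order all_algebra.
Set Implicit Arguments. Unset Strict Implicit. Unset Printing Implicit Defensive.
Import Order.TTheory GRing.Theory Num.Theory.
Local Open Scope ring_scope.

(* A game: vertices 'I_n, edge relation E : rel 'I_n (no multiple edges by
   construction), Vmax : {set 'I_n} (Vmin is its complement), weights
   r : 'I_n -> 'I_n -> R (only the values r i j with E i j matter). *)

Definition out_edges (n : nat) (E : rel 'I_n) : Prop := forall i, exists j, E i j.

(* A policy is a map 'I_n -> 'I_n; it is required to follow edges on the
   vertices of its player, its values elsewhere are irrelevant. *)
Definition max_policy (n : nat) (E : rel 'I_n) (Vmax : {set 'I_n})
  (sigma : 'I_n -> 'I_n) : Prop := forall i, i \in Vmax -> E i (sigma i).
Definition min_policy (n : nat) (E : rel 'I_n) (Vmax : {set 'I_n})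
  (tau : 'I_n -> 'I_n) : Prop := forall i, i \notin Vmax -> E i (tau i).

Definition succ (n : nat) (Vmax : {set 'I_n}) (sigma tau : 'I_n -> 'I_n)
  (i : 'I_n) : 'I_n := if i \in Vmax then sigma i else tau i.

Definition in_Esigtau (n : nat) (Vmax : {set 'I_n}) (sigma tau : 'I_n -> 'I_n)
  (i j : 'I_n) : bool := j == succ Vmax sigma tau i.

Definition on_cycle (n : nat) (s : 'I_n -> 'I_n) (x : 'I_n) : bool :=
  fconnect s (s x) x.

(* Xi: the functional graph E^{sigma,tau} has exactly one directed cycle,
   i.e. there is a cycle, and all cycle vertices lie on the same cycle. *)
Definition in_Xi (n : nat) (Vmax : {set 'I_n}) (sigma tau : 'I_n -> 'I_n) : Prop :=
  let s := succ Vmax sigma tau in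
  exists x, on_cycle s x /\ forall y, on_cycle s y -> fconnect s x y.

(* mean payoff from i: after n steps the token is on the cycle it enters;
   g_i is the mean weight of that cycle (length = orbit size). *)
Definition mean_payoff (R : realFieldType) (n : nat) (Vmax : {set 'I_n})
  (r : 'I_n -> 'I_n -> R) (sigma tau : 'I_n -> 'I_n) (i : 'I_n) : R :=
  let s := succ Vmax sigma tau in
  let x := iter n s i in
  let p := order s x in
  (\sum_(k < p) r (iter k s x) (iter k.+1 s x)) / p%:R.

Definition optimal_pair (R : realFieldType) (n : nat) (E : rel 'I_n)
  (Vmax : {set 'I_n}) (r : 'I_n -> 'I_n -> R) (sigma tau : 'I_n -> 'I_n) : Prop :=
  max_policy E Vmax sigma /\ min_policy E Vmax tau /\
  exists lambda : 'I_n -> R,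
    forall i (sigma' tau' : 'I_n -> 'I_n),
      max_policy E Vmax sigma' -> min_policy E Vmax tau' ->
      mean_payoff Vmax r sigma' tau i <= lambda i /\
      lambda i <= mean_payoff Vmax r sigma tau' i.

Definition perturb (R : realFieldType) (n : nat) (Vmax : {set 'I_n})
  (sigma tau : 'I_n -> 'I_n) (rt : 'I_n -> 'I_n -> R) (c : R) (i j : 'I_n) : R :=
  if in_Esigtau Vmax sigma tau i j then rt i j else rt i j + c.

(* Write s for the successor map of (sigma, tau) and C for its unique cycle.  Against
   tau, a deviation sigma' of Max leads the token onto a cycle C'.  If C' only uses
   edges of s, then C' = C and nothing changes.  Otherwise C' contains an edge that
   r^(2) raises by 2 n eps; as |C'| <= n its r^(2)-mean exceeds its rt-mean by at
   least 2 eps, while r and rt differ by at most eps on every mean.  Optimality for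
   r^(2) bounds the r^(2)-mean of C' by that of C, which equals its rt-mean, and
   hence the r-mean of C' by the r-mean of C.  Deviations of Min are symmetric, with
   r^(1) in place of r^(2). *)

From mathcomp Require Import all_boot all_order all_algebra.
From mathcomp Require Import lra.
Import Order.TTheory GRing.Theory Num.Theory.
Set Implicit Arguments. Unset Strict Implicit. Unset Printing Implicit Defensive.

Section FunctionalGraph.
Variables (n : nat) (s : 'I_n -> 'I_n).

Lemma iter_order_on_cycle x : on_cycle s x -> iter (order s x) s x = x.
Proof. by move=> h; apply/(orbitPcycle 4%N 2%N). Qed.

Lemma on_cycle_iter k x : on_cycle s x -> on_cycle s (iter k s x).
Proof.
move=> /(orbitPcycle 2%N 3%N) [m hm]; apply/(orbitPcycle 3%N 2%N); exists m.
by rewrite -iterD addnC iterD hm.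
Qed.

Lemma order_le_card x : (order s x <= n)%N.
Proof. by rewrite -[X in (_ <= X)%N]card_ord max_card. Qed.

(* Pigeonhole: the n+1 points of the trajectory cannot all be distinct. *)
Lemma on_cycle_iter_card i : on_cycle s (iter n s i).
Proof.
have : ~~ uniq (traject s i n.+1).
  apply/negP => /card_uniqP; rewrite size_traject => hcard.
  by have := max_card (mem (traject s i n.+1)); rewrite hcard card_ord ltnn.
rewrite looping_uniq negbK => /trajectP [j lt_jn hj].
rewrite hj; apply/(orbitPcycle 3%N 2%N); exists (n - j).-1.
rewrite prednK ?subn_gt0 // -iterD subnK //; exact: ltnW.
Qed.

End FunctionalGraph.

Section Agreement.
Variables (n : nat) (s t : 'I_n -> 'I_n) (x : 'I_n).
Hypothesis agree : forall z, fconnect t x z -> t z = s z.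

Lemma iter_agree k : iter k t x = iter k s x.
Proof. by elim: k => //= k IH; rewrite agree ?fconnect_iter // IH. Qed.

Lemma order_agree : order t x = order s x.
Proof.
apply: eq_card => z; rewrite !inE.
apply/idP/idP => /iter_findex <-.
  by rewrite iter_agree fconnect_iter.
by rewrite -iter_agree fconnect_iter.
Qed.

Lemma on_cycle_agree : on_cycle t x -> on_cycle s x.
Proof.
move/iter_order_on_cycle => hx; apply/(orbitPcycle 4%N 2%N).
by rewrite -order_agree -iter_agree.
Qed.

End Agreement.

Local Open Scope ring_scope.

Section CycleMean.
Variables (R : realFieldType) (n : nat).
Implicit Types (w : 'I_n -> 'I_n -> R) (s t : 'I_n -> 'I_n).

Definition cycle_mean w s x : R :=
  (\sum_(k < order s x) w (iter k s x) (iter k.+1 s x)) / (order s x)%:R.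

Lemma mean_payoffE Vmax w sg tu i :
  mean_payoff Vmax w sg tu i
  = cycle_mean w (succ Vmax sg tu) (iter n (succ Vmax sg tu) i).
Proof. by []. Qed.

Lemma eq_cycle_mean w1 w2 s x : w1 =2 w2 -> cycle_mean w1 s x = cycle_mean w2 s x.
Proof. by move=> hw; congr (_ / _); apply: eq_bigr => k _; rewrite hw. Qed.

Lemma cycle_mean_opp w s x : cycle_mean (fun a b => - w a b) s x = - cycle_mean w s x.
Proof. by rewrite /cycle_mean sumrN mulNr. Qed.

Lemma cycle_mean_agree w s t x :
  (forall z, fconnect t x z -> t z = s z) -> cycle_mean w t x = cycle_mean w s x.
Proof.
move=> agree; rewrite /cycle_mean (order_agree agree); congr (_ / _).
by apply: eq_bigr => k _; rewrite !(iter_agree agree).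
Qed.

Lemma cycle_mean_step w s x : on_cycle s x -> cycle_mean w s (s x) = cycle_mean w s x.
Proof.
move=> hx; rewrite /cycle_mean order_id_cycle -?fconnect_f //.
have := iter_order_on_cycle hx; have := order_gt0 s x.
case: (order s x) => // q _ hq; congr (_ / _).
under eq_bigr do rewrite -!iterSr.
by rewrite big_ord_recr big_ord_recl /= addrC -iterS hq.
Qed.

Lemma cycle_mean_fconnect w s x y :
  on_cycle s x -> fconnect s x y -> cycle_mean w s y = cycle_mean w s x.
Proof.
move=> hx /iter_findex <-; elim: (findex s x y) => //= k IH.
by rewrite cycle_mean_step ?IH ?on_cycle_iter.
Qed.

Lemma cycle_mean_le_dist w1 w2 s x (eps : R) :
  (forall z, `|w1 z (s z) - w2 z (s z)| <= eps) ->
  cycle_mean w1 s x <= cycle_mean w2 s x + eps.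
Proof.
move=> close; have p_gt0 : 0 < (order s x)%:R :> R by rewrite ltr0n order_gt0.
rewrite /cycle_mean -[eps](mulfK (lt0r_neq0 p_gt0)) -mulrDl.
apply: ler_wpM2r; first by rewrite invr_ge0 ltW.
rewrite mulr_natr -[X in eps *+ X]card_ord -sumr_const -big_split /=.
apply: ler_sum => k _; have := close (iter k s x).
by rewrite ler_distl => /andP [_].
Qed.

Definition perturb_off s w (c : R) a b : R := if b == s a then w a b else w a b + c.

Lemma perturbE Vmax sg tu w c :
  perturb Vmax sg tu w c = perturb_off (succ Vmax sg tu) w c.
Proof. by []. Qed.

Lemma perturb_off_opp s w c :
  perturb_off s (fun a b => - w a b) c =2 (fun a b => - perturb_off s w (- c) a b).
Proof. by move=> a b; rewrite /perturb_off; case: ifP; rewrite ?opprD ?opprK. Qed.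

Lemma cycle_mean_perturb_off_self s w c x :
  cycle_mean (perturb_off s w c) s x = cycle_mean w s x.
Proof. by congr (_ / _); apply: eq_bigr => k _; rewrite /perturb_off /= eqxx. Qed.

Lemma cycle_mean_perturb_off_ge s t w c x z :
  0 <= c -> fconnect t x z -> t z != s z ->
  cycle_mean w t x + c / (order t x)%:R <= cycle_mean (perturb_off s w c) t x.
Proof.
rewrite /cycle_mean => c_ge0 xz tz_off; pose k0 := Ordinal (findex_max xz).
pose off k := if iter k.+1 t x == s (iter k t x) then 0 else c.
have -> : \sum_(k < order t x) perturb_off s w c (iter k t x) (iter k.+1 t x)
        = \sum_(k < order t x) w (iter k t x) (iter k.+1 t x) + \sum_(k < order t x) off k.
  rewrite -big_split; apply: eq_bigr => k _.
  by rewrite /perturb_off /off /=; case: ifP; rewrite ?addr0.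
rewrite -mulrDl; apply: ler_wpM2r; first by rewrite invr_ge0 ler0n.
rewrite lerD2l (bigD1 k0) //= /off /= iter_findex // ifN // lerDl.
by apply: sumr_ge0 => k _; case: ifP.
Qed.

End CycleMean.

Section Stability.
Variables (R : realFieldType) (n : nat) (s : 'I_n -> 'I_n) (x0 : 'I_n).
Hypothesis x0_cycle : on_cycle s x0.
Hypothesis unique_cycle : forall z, on_cycle s z -> fconnect s x0 z.

Lemma cycle_mean_le_of_perturbed (r rt : 'I_n -> 'I_n -> R) (eps : R) t y :
  0 <= eps ->
  (forall z, `|r z (s z) - rt z (s z)| <= eps) ->
  (forall z, `|r z (t z) - rt z (t z)| <= eps) ->
  on_cycle t y ->
  cycle_mean (perturb_off s rt (2 * n%:R * eps)) t y
    <= cycle_mean (perturb_off s rt (2 * n%:R * eps)) s x0 ->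
  cycle_mean r t y <= cycle_mean r s x0.
Proof.
move=> eps_ge0 close_s close_t y_cycle; rewrite cycle_mean_perturb_off_self => le_pert.
have [agree | [z yz tz_off]] :
    (forall z, fconnect t y z -> t z = s z) \/ exists2 z, fconnect t y z & t z != s z.
- have [/forallP agree | ] := boolP [forall z, fconnect t y z ==> (t z == s z)].
    by left=> z yz; apply/eqP/(implyP (agree z)).
  rewrite negb_forall => /existsP [z]; rewrite negb_imply => /andP [yz tz].
  by right; exists z.
- have y_on_s := unique_cycle (on_cycle_agree agree y_cycle).
  by rewrite (cycle_mean_agree r agree) (cycle_mean_fconnect r x0_cycle y_on_s).
(* The cycle through y uses an edge outside the cycle of s, whose perturbation by
   2 n eps lifts the mean of a cycle of length at most n by at least 2 eps. *)
have p_le_n : (order t y)%:R <= n%:R :> R by rewrite ler_nat order_le_card.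
have p_gt0 : 0 < (order t y)%:R :> R by rewrite ltr0n order_gt0.
have gain : 2 * eps <= 2 * n%:R * eps / (order t y)%:R.
  by rewrite ler_pdivlMr //; nra.
have c_ge0 : 0 <= 2 * n%:R * eps by apply: mulr_ge0 => //; apply: mulr_ge0.
have := cycle_mean_perturb_off_ge rt c_ge0 yz tz_off.
have := cycle_mean_le_dist y close_t.
have : cycle_mean rt s x0 <= cycle_mean r s x0 + eps.
  by apply: cycle_mean_le_dist => z'; rewrite distrC close_s.
lra.
Qed.

Lemma cycle_mean_ge_of_perturbed (r rt : 'I_n -> 'I_n -> R) (eps : R) t y :
  0 <= eps ->
  (forall z, `|r z (s z) - rt z (s z)| <= eps) ->
  (forall z, `|r z (t z) - rt z (t z)| <= eps) ->
  on_cycle t y ->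
  cycle_mean (perturb_off s rt (- (2 * n%:R * eps))) s x0
    <= cycle_mean (perturb_off s rt (- (2 * n%:R * eps))) t y ->
  cycle_mean r s x0 <= cycle_mean r t y.
Proof.
move=> eps_ge0 close_s close_t y_cycle le_pert.
have close_opp u z : `|- r z (u z) - - rt z (u z)| = `|r z (u z) - rt z (u z)|.
  by rewrite -opprD normrN.
(* Negating all weights exchanges the two perturbations. *)
have := @cycle_mean_le_of_perturbed (fun a b => - r a b) (fun a b => - rt a b) eps t y.
rewrite !cycle_mean_opp lerN2; apply=> // [z | z |]; rewrite ?close_opp //.
rewrite (eq_cycle_mean _ _ (perturb_off_opp s rt _)).
by rewrite (eq_cycle_mean _ _ (perturb_off_opp s rt _)) !cycle_mean_opp lerN2.
Qed.

End Stability.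

Theorem mainTheorem18 (R : realFieldType) (n : nat) (E : rel 'I_n)
  (Vmax : {set 'I_n}) (r rt : 'I_n -> 'I_n -> R) (eps : R)
  (sigma tau : 'I_n -> 'I_n) :
  out_edges E ->
  0 < eps ->
  (forall i j, E i j -> `|r i j - rt i j| <= eps) ->
  max_policy E Vmax sigma -> min_policy E Vmax tau ->
  in_Xi Vmax sigma tau ->
  optimal_pair E Vmax (perturb Vmax sigma tau rt (- (2 * n%:R * eps))) sigma tau ->
  optimal_pair E Vmax (perturb Vmax sigma tau rt (2 * n%:R * eps)) sigma tau ->
  optimal_pair E Vmax r sigma tau.
Proof.
move=> _ eps_gt0 close hsig htau [x0 [x0_cycle unique_cycle]].
move=> [_ [_ [l1 opt1]]] [_ [_ [l2 opt2]]].
have close_along sg tu : max_policy E Vmax sg -> min_policy E Vmax tu ->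
    forall z, `|r z (succ Vmax sg tu z) - rt z (succ Vmax sg tu z)| <= eps.
  move=> hsg htu z; apply: close; rewrite /succ.
  by case: ifP => hz; [apply: hsg | apply: htu; rewrite hz].
have value (w : 'I_n -> 'I_n -> R) i :
    mean_payoff Vmax w sigma tau i = cycle_mean w (succ Vmax sigma tau) x0.
  rewrite mean_payoffE; apply: cycle_mean_fconnect x0_cycle _.
  exact: unique_cycle (on_cycle_iter_card _ _).
split=> //; split=> //; exists (fun=> cycle_mean r (succ Vmax sigma tau) x0).
move=> i sg tu hsg htu; rewrite !mean_payoffE; split.
- apply: (cycle_mean_le_of_perturbed x0_cycle unique_cycle (ltW eps_gt0)
    (close_along _ _ hsig htau) (close_along _ _ hsg htau) (on_cycle_iter_card _ _)).
  have := le_trans (opt2 i sg tau hsg htau).1 (opt2 i sigma tau hsig htau).2.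
  by rewrite value mean_payoffE perturbE.
- apply: (cycle_mean_ge_of_perturbed x0_cycle unique_cycle (ltW eps_gt0)
    (close_along _ _ hsig htau) (close_along _ _ hsig htu) (on_cycle_iter_card _ _)).
  have := le_trans (opt1 i sigma tau hsig htau).1 (opt1 i sigma tu hsig htu).2.
  by rewrite value mean_payoffE perturbE.
Qed.
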